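(* The operator norm $\|\cdot\|_\infty$ is the maximum element of the class of $M$-norms $\||\cdot\||$ on $\mathbb{M}_n$ satisfying $\||A\||\le\omega_*(A)$ for all $A\in\mathbb{M}_n$.
   Context: $\mathbb{M}_n$ is the algebra of complex $n\times n$ matrices with identity $I$; $\|\cdot\|_\infty$ is the operator norm, $\omega(A)=\sup\{|\langle x,Ax\rangle|:\|x\|=1\}$ the numerical radius, and $\omega_*(Y)=\sup\{|\mathrm{Tr}(Y^*X)|:\omega(X)\le1\}$ its dual norm. A norm $\||\cdot\||$ on $\mathbb{M}_n$ is an $M$-norm if $\left\||\sum_{i=1}^k C_i^*X_iC_i\right\||\le \max_{i}\||X_i\||$ for all $k$, all $X_i$ and all $C_i$ with $\sum_{i=1}^k C_i^*C_i=I$. *)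

From HB Require Import structures.
From mathcomp Require Import all_boot all_order all_algebra.
From mathcomp Require Import complex.
From mathcomp Require Import classical_sets reals.
Set Implicit Arguments. Unset Strict Implicit. Unset Printing Implicit Defensive.
Import Order.TTheory GRing.Theory Num.Theory.
Local Open Scope ring_scope.
Local Open Scope classical_set_scope.

Section Defs.
Variable R : realType.
Local Notation C := R[i].

Definition cmod (z : C) : R := Num.sqrt (complex.Re z ^+ 2 + complex.Im z ^+ 2).

Definition adjmx m n (A : 'M[C]_(m, n)) : 'M[C]_(n, m) :=
  (map_mx (@conjc R) A)^T.

Definition vnorm n (x : 'cV[C]_n) : R := Num.sqrt (\sum_i cmod (x i 0) ^+ 2).

Definition quadform n (A : 'M[C]_n) (x : 'cV[C]_n) : C := (adjmx x *m A *m x) 0 0.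

Definition opnorm n (A : 'M[C]_n) : R :=
  sup [set r | exists x : 'cV[C]_n, vnorm x = 1 /\ r = vnorm (A *m x)].

Definition numrad n (A : 'M[C]_n) : R :=
  sup [set r | exists x : 'cV[C]_n, vnorm x = 1 /\ r = cmod (quadform A x)].

Definition numrad_dual n (Y : 'M[C]_n) : R :=
  sup [set r | exists X : 'M[C]_n, numrad X <= 1 /\ r = cmod (\tr (adjmx Y *m X))].

Definition is_norm n (N : 'M[C]_n -> R) : Prop :=
  [/\ (forall A, 0 <= N A),
      (forall A, N A = 0 -> A = 0),
      (forall (c : C) A, N (c *: A) = cmod c * N A) &
      (forall A B, N (A + B) <= N A + N B)].

Definition is_Mnorm n (N : 'M[C]_n -> R) : Prop :=
  is_norm N /\
  forall (k : nat) (X Cs : 'I_k -> 'M[C]_n),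
    \sum_(i < k) adjmx (Cs i) *m Cs i = 1%:M ->
    N (\sum_(i < k) adjmx (Cs i) *m X i *m Cs i) <= \big[Num.max/0]_(i < k) N (X i).

End Defs.

(* The operator norm is an M-norm: if sum_i C_i^* C_i = I then sum_i ||C_i x||^2 = ||x||^2, and
   Cauchy-Schwarz bounds <y, sum_i C_i^* X_i C_i x> by max_i ||X_i|| ||y|| ||x||.  It lies below
   w_* because, for a unit x and y = Ax/||Ax||, the rank-one matrix y x^* has numerical radius
   at most 1 and the trace of A^* y x^* is ||Ax||.

   Conversely let N be an M-norm below w_*.  Then N(E_11) <= w_*(E_11) <= 1, since the (1,1)
   entry of X is a value of its quadratic form.  The M-norm inequality with C_i = E_1i turns
   this into N(D) <= 1 for every diagonal contraction D, and with a single unitary C it gives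
   N(P^* X P) <= N(X); by the spectral theorem N(U) <= 1 for every unitary U.  An invertible
   B with ||B|| <= 1 has a polar form B = U P^* T P with T diagonal, 0 < T <= 1, so it is the
   average of the two unitaries U P^* (T +- i sqrt(1 - T^2)) P and N(B) <= 1; by homogeneity
   N(B) <= ||B|| for every invertible B.  Finally A + tI is invertible for all but finitely many
   t, and N(A) <= N(A + tI) + t N(I) <= ||A|| + 2t for arbitrarily small t > 0. *)

From HB Require Import structures.
From mathcomp Require Import all_boot all_order all_algebra.
From mathcomp Require Import complex.
From mathcomp Require Import classical_sets reals boolp ring lra.
Import Order.TTheory GRing.Theory Num.Theory Num.Def.
Set Implicit Arguments. Unset Strict Implicit. Unset Printing Implicit Defensive.
Local Open Scope ring_scope.

Section Complex.
Context {R : realType}.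
Local Notation C := R[i].
Local Notation "x %:C" := (real_complex R x) (format "x %:C").

Lemma cmodE (z : C) : (cmod z)%:C = `|z|.
Proof. by rewrite normc_def. Qed.

Lemma cmod_ge0 (z : C) : 0 <= cmod z.
Proof. exact: sqrtr_ge0. Qed.

Lemma cmod_eq0 (z : C) : (cmod z == 0) = (z == 0).
Proof. by rewrite -(inj_eq (@complexI R)) cmodE normr_eq0. Qed.

Lemma cmodM (a b : C) : cmod (a * b) = cmod a * cmod b.
Proof. by apply: complexI; rewrite rmorphM cmodE normrM -!cmodE. Qed.

Lemma ler_cmodD (a b : C) : cmod (a + b) <= cmod a + cmod b.
Proof. by rewrite -lecR rmorphD /= !cmodE ler_normD. Qed.

Lemma cmodN (a : C) : cmod (- a) = cmod a.
Proof. by apply: complexI; rewrite !cmodE normrN. Qed.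

Lemma cmod_conjC (a : C) : cmod a^* = cmod a.
Proof. by apply: complexI; rewrite !cmodE norm_conjC. Qed.

Lemma cmod_nat k : cmod (k%:R : C) = k%:R.
Proof. by apply: complexI; rewrite cmodE normr_nat rmorph_nat. Qed.

Lemma cmod0 : cmod (0 : C) = 0.
Proof. exact: (cmod_nat 0). Qed.

Lemma cmod1 : cmod (1 : C) = 1.
Proof. exact: (cmod_nat 1). Qed.

Lemma cmodi : cmod ('i : C) = 1.
Proof. by apply: complexI; rewrite cmodE normCi. Qed.

Lemma ger0_cmod (r : R) : 0 <= r -> cmod r%:C = r.
Proof. by move=> r0; rewrite /cmod /= expr0n /= addr0 sqrtr_sqr ger0_norm. Qed.

Lemma conj_real_complex (r : R) : (r%:C)^* = r%:C.
Proof. exact: conjc_real. Qed.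

Lemma sqr_cmodC (a : C) : (cmod a ^+ 2)%:C = a^* * a.
Proof. by rewrite rmorphXn /= cmodE normCKC. Qed.

Lemma ler_cmod_sum k (f : 'I_k -> C) : cmod (\sum_i f i) <= \sum_i cmod (f i).
Proof.
elim/big_rec2: _ => [|i y1 y2 _ h]; first by rewrite cmod0.
by apply: le_trans (ler_cmodD _ _) _; rewrite lerD2l.
Qed.

End Complex.

Section Adjoint.
Context {R : realType}.
Local Notation C := R[i].
Variable n : nat.
Implicit Types (U : 'M[C]_n) (d e : 'rV[C]_n).

Lemma adjmx_trmxC m p (M : 'M[C]_(m, p)) : adjmx M = (M ^t conjC)%sesqui.
Proof. exact: map_trmx. Qed.

Lemma adjmxK m p (M : 'M[C]_(m, p)) : adjmx (adjmx M) = M.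
Proof. by apply/matrixP => i j; rewrite !mxE conjcK. Qed.

Lemma adjmxM m p q (A : 'M[C]_(m, p)) (B : 'M[C]_(p, q)) :
  adjmx (A *m B) = adjmx B *m adjmx A.
Proof. by rewrite /adjmx map_mxM trmx_mul. Qed.

Lemma adjmx_delta m p (i : 'I_m) (j : 'I_p) :
  adjmx (delta_mx i j : 'M[C]_(m, p)) = delta_mx j i.
Proof. by apply/matrixP => a b; rewrite !mxE rmorph_nat andbC. Qed.

Lemma adjmx_diag d : adjmx (diag_mx d) = diag_mx (\row_j (d 0 j)^*).
Proof.
apply/matrixP => a b; rewrite !mxE rmorphMn eq_sym.
by case: eqVneq => [->|].
Qed.

Lemma unitarymx_adjmx U : U \is unitarymx -> adjmx U *m U = 1%:M /\ U *m adjmx U = 1%:M.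
Proof. by move/unitarymxP; rewrite -adjmx_trmxC => UU; split => //; apply: mulmx1C. Qed.

Lemma adjmx_unitarymx U : adjmx U *m U = 1%:M -> U \is unitarymx.
Proof. by move=> /mulmx1C UU; apply/unitarymxP; rewrite -adjmx_trmxC. Qed.

Lemma adjmx_unitarymxE U : (adjmx U \is unitarymx) = (U \is unitarymx).
Proof. by rewrite adjmx_trmxC trmxC_unitary. Qed.

Lemma diag_unitarymx e : (forall j, (e 0 j)^* * e 0 j = 1) -> diag_mx e \is unitarymx.
Proof.
move=> e1; apply: adjmx_unitarymx; rewrite adjmx_diag mulmx_diag -diag_const_mx.
by congr diag_mx; apply/rowP => j; rewrite !mxE e1.
Qed.

End Adjoint.

Section Vectors.
Context {R : realType}.
Local Notation C := R[i].
Local Notation "x %:C" := (real_complex R x) (format "x %:C").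
Variable n : nat.
Implicit Types x y u v : 'cV[C]_n.

Definition ip x y : C := (adjmx x *m y) 0 0.

Lemma ipE x y : ip x y = \sum_i (x i 0)^* * y i 0.
Proof. by rewrite /ip !mxE; apply: eq_bigr => i _; rewrite !mxE. Qed.

Lemma ipDl u v y : ip (u + v) y = ip u y + ip v y.
Proof. by rewrite !ipE -big_split; apply: eq_bigr => i _; rewrite !mxE rmorphD mulrDl. Qed.

Lemma ipDr x u v : ip x (u + v) = ip x u + ip x v.
Proof. by rewrite /ip mulmxDr mxE. Qed.

Lemma ipZl c x y : ip (c *: x) y = c^* * ip x y.
Proof.
rewrite !ipE mulr_sumr; apply: eq_bigr => i _.
by rewrite mxE rmorphM mulrA.
Qed.

Lemma ipZr c x y : ip x (c *: y) = c * ip x y.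
Proof. by rewrite /ip -scalemxAr mxE. Qed.

Lemma ip_sumr k x (f : 'I_k -> 'cV[C]_n) : ip x (\sum_i f i) = \sum_i ip x (f i).
Proof. by rewrite /ip mulmx_sumr summxE. Qed.

Lemma ip_adjmxr (M : 'M[C]_n) u v : ip u (adjmx M *m v) = ip (M *m u) v.
Proof. by rewrite /ip adjmxM mulmxA. Qed.

Lemma vnorm_ge0 x : 0 <= vnorm x.
Proof. exact: sqrtr_ge0. Qed.

Lemma sqr_vnorm x : vnorm x ^+ 2 = \sum_i cmod (x i 0) ^+ 2.
Proof. by rewrite sqr_sqrtr // sumr_ge0 // => i _; rewrite exprn_ge0 // cmod_ge0. Qed.

Lemma sqr_vnormC x : (vnorm x ^+ 2)%:C = ip x x.
Proof. by rewrite sqr_vnorm rmorph_sum /= ipE; apply: eq_bigr => i _; rewrite sqr_cmodC. Qed.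

Lemma ip_dotmx x y : ip x y = dotmx y^T x^T.
Proof. by rewrite ipE dotmxE !mxE; apply: eq_bigr => i _; rewrite !mxE mulrC. Qed.

Lemma vnormE x : (vnorm x)%:C = sqrtC (dotmx x^T x^T).
Proof. by rewrite -ip_dotmx -sqr_vnormC rmorphXn sqrCK // ler0c vnorm_ge0. Qed.

Lemma ip_CauchySchwarz x y : cmod (ip x y) <= vnorm x * vnorm y.
Proof.
rewrite -lecR rmorphM /= cmodE ip_dotmx !vnormE mulrC.
exact: (CauchySchwarz_sqrt _ _ _).1.
Qed.

Lemma ler_vnormD x y : vnorm (x + y) <= vnorm x + vnorm y.
Proof. by rewrite -lecR rmorphD /= !vnormE linearD; exact: (triangle_lerif _ _ _).1. Qed.

Lemma vnormZ c x : vnorm (c *: x) = cmod c * vnorm x.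
Proof.
rewrite /vnorm; under eq_bigr => i _ do rewrite mxE cmodM exprMn.
by rewrite -mulr_sumr sqrtrM ?exprn_ge0 ?cmod_ge0 // sqrtr_sqr ger0_norm ?cmod_ge0.
Qed.

Lemma vnorm0 : vnorm (0 : 'cV[C]_n) = 0.
Proof. by rewrite -(scale0r (0 : 'cV[C]_n)) vnormZ cmod0 mul0r. Qed.

Lemma vnorm_eq0 x : vnorm x = 0 -> x = 0.
Proof.
move=> x0; have : dotmx x^T x^T == 0 by rewrite -ip_dotmx -sqr_vnormC x0 expr0n rmorph0.
by rewrite dnorm_eq0 => /eqP/(congr1 trmx); rewrite trmxK trmx0.
Qed.

Lemma ler_vnorm_sum k (f : 'I_k -> 'cV[C]_n) : vnorm (\sum_i f i) <= \sum_i vnorm (f i).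
Proof.
elim/big_rec2: _ => [|i y1 y2 _ h]; first by rewrite vnorm0.
by apply: le_trans (ler_vnormD _ _) _; rewrite lerD2l.
Qed.

Lemma ler_cmod_vnorm x i : cmod (x i 0) <= vnorm x.
Proof.
rewrite -(ger0_norm (cmod_ge0 _)) -sqrtr_sqr; apply: ler_wsqrtr.
by rewrite (bigD1 i) //= lerDl sumr_ge0 // => j _; rewrite exprn_ge0 // cmod_ge0.
Qed.

Lemma vnorm_delta i : vnorm (delta_mx i 0 : 'cV[C]_n) = 1.
Proof.
rewrite /vnorm (bigD1 i) //= big1 ?addr0 => [|j ji].
  by rewrite mxE !eqxx cmod1 expr1n sqrtr1.
by rewrite mxE (negbTE ji) cmod0 expr0n.
Qed.

Lemma vnorm_isometry (M : 'M[C]_n) x : adjmx M *m M = 1%:M -> vnorm (M *m x) = vnorm x.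
Proof.
move=> isoM; apply/eqP; rewrite -(eqrXn2 (ltn0Sn 1)) ?vnorm_ge0 //; apply/eqP.
by apply: complexI; rewrite !sqr_vnormC -ip_adjmxr mulmxA isoM mul1mx.
Qed.

Lemma unit_direction x : x != 0 -> exists u, vnorm u = 1 /\ x = (vnorm x)%:C *: u.
Proof.
move=> x0; have vx0 : vnorm x != 0 by apply: contra x0 => /eqP/vnorm_eq0 ->.
exists ((vnorm x)^-1%:C *: x); split.
  by rewrite vnormZ ger0_cmod ?invr_ge0 ?vnorm_ge0 // mulVf.
by rewrite scalerA -rmorphM /= divff // scale1r.
Qed.

End Vectors.

Section Sup.
Context {R : realType}.
Local Open Scope classical_set_scope.
Implicit Types E : set R.

Lemma sup_le_nonneg E c : 0 <= c -> (forall r, E r -> r <= c) -> sup E <= c.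
Proof.
move=> c0 Ec; have [E0|/nonemptyPn ->] := pselect (E !=set0); last by rewrite sup0.
by apply: ge_sup => // r /Ec.
Qed.

Lemma le_sup_bounded E M r : (forall s, E s -> s <= M) -> E r -> r <= sup E.
Proof. by move=> EM Er; apply: ub_le_sup => //; exists M => s /EM. Qed.

Lemma sup_ge0_bounded E M : (forall s, E s -> s <= M) ->
  (forall s, E s -> 0 <= s) -> 0 <= sup E.
Proof.
move=> EM E0; have [[r Er]|/nonemptyPn ->] := pselect (E !=set0); last by rewrite sup0.
exact: le_trans (E0 _ Er) (le_sup_bounded EM Er).
Qed.

End Sup.

Lemma ler_sum_mul_AMGM (R : realFieldType) k (a b : 'I_k -> R) (s : R) :
  2 * s * \sum_i a i * b i <= \sum_i a i ^+ 2 + s ^+ 2 * \sum_i b i ^+ 2.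
Proof.
rewrite mulr_sumr mulr_sumr -big_split /=; apply: ler_sum => i _.
have := sqr_ge0 (a i - s * b i); rewrite sqrrB; lra.
Qed.

Section OperatorNorm.
Context {R : realType}.
Local Notation C := R[i].
Local Notation "x %:C" := (real_complex R x) (format "x %:C").
Variable n : nat.
Implicit Types (A B : 'M[C]_n) (x : 'cV[C]_n).

Lemma mulmx_colE A x : A *m x = \sum_j x j 0 *: col j A.
Proof.
apply/matrixP => i k; rewrite ord1 !mxE summxE; apply: eq_bigr => j _.
by rewrite !mxE mulrC.
Qed.

Lemma col_delta A j : A *m delta_mx j 0 = col j A.
Proof.
apply/matrixP => i k; rewrite ord1 !mxE (bigD1 j) //= big1 ?addr0 => [|l lj].
  by rewrite !mxE !eqxx mulr1.
by rewrite !mxE (negbTE lj) mulr0.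
Qed.

Let opnorm_bounded A x : vnorm x = 1 -> vnorm (A *m x) <= \sum_j vnorm (col j A).
Proof.
move=> x1; rewrite mulmx_colE; apply: le_trans (ler_vnorm_sum _) _.
apply: ler_sum => j _; rewrite vnormZ ler_piMl ?vnorm_ge0 //.
by rewrite -x1 ler_cmod_vnorm.
Qed.

Lemma ler_opnorm A x : vnorm x = 1 -> vnorm (A *m x) <= opnorm A.
Proof.
move=> x1; apply: le_sup_bounded; last by exists x.
by move=> _ [y [y1 ->]]; apply: opnorm_bounded.
Qed.

Lemma opnorm_le A c : 0 <= c ->
  (forall x, vnorm x = 1 -> vnorm (A *m x) <= c) -> opnorm A <= c.
Proof. by move=> c0 Ac; apply: sup_le_nonneg => // _ [x [x1 ->]]; apply: Ac. Qed.

Lemma opnorm_ge0 A : 0 <= opnorm A.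
Proof.
apply: sup_ge0_bounded => [_ [y [y1 ->]]|_ [y [_ ->]]]; last exact: vnorm_ge0.
exact: opnorm_bounded.
Qed.

Lemma ler_vnorm_mulmx A x : vnorm (A *m x) <= opnorm A * vnorm x.
Proof.
have [->|x0] := eqVneq x 0; first by rewrite mulmx0 !vnorm0 mulr0.
have [u [u1 ->]] := unit_direction x0.
rewrite -scalemxAr !vnormZ u1 mulr1 mulrC ler_wpM2r ?cmod_ge0 //.
exact: ler_opnorm.
Qed.

Lemma opnorm_eq0 A : opnorm A = 0 -> A = 0.
Proof.
move=> A0; apply/matrixP => i j.
have := ler_opnorm A (vnorm_delta j); rewrite A0 col_delta => col_le0.
have /vnorm_eq0/matrixP/(_ i 0) : vnorm (col j A) = 0.
  by apply/le_anti; rewrite col_le0 vnorm_ge0.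
by rewrite !mxE.
Qed.

Lemma opnormZ (c : C) A : opnorm (c *: A) = cmod c * opnorm A.
Proof.
have opnormZ_le (d : C) B : opnorm (d *: B) <= cmod d * opnorm B.
  apply: opnorm_le => [|x x1]; first by rewrite mulr_ge0 ?cmod_ge0 ?opnorm_ge0.
  by rewrite -scalemxAl vnormZ ler_wpM2l ?cmod_ge0 ?ler_opnorm.
apply/le_anti; rewrite opnormZ_le /=.
have [->|c0] := eqVneq c 0; first by rewrite cmod0 mul0r opnorm_ge0.
have cpos : 0 < cmod c by rewrite lt_def cmod_eq0 c0 cmod_ge0.
have := opnormZ_le c^-1 (c *: A); rewrite scalerA mulVf // scale1r.
have -> : cmod c^-1 = (cmod c)^-1.
  by apply: (mulfI (lt0r_neq0 cpos)); rewrite -cmodM divff // cmod1 divff ?lt0r_neq0.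
by rewrite -(ler_pM2l cpos) mulrA divff ?lt0r_neq0 // mul1r.
Qed.

Lemma ler_opnormD A B : opnorm (A + B) <= opnorm A + opnorm B.
Proof.
apply: opnorm_le => [|x x1]; first by rewrite addr_ge0 ?opnorm_ge0.
by rewrite mulmxDl; apply: le_trans (ler_vnormD _ _) _; rewrite lerD ?ler_opnorm.
Qed.

Lemma opnorm_is_norm : is_norm (@opnorm R n).
Proof. by split; [exact: opnorm_ge0 | exact: opnorm_eq0 | exact: opnormZ | exact: ler_opnormD]. Qed.

Lemma opnorm1_le : opnorm (1%:M : 'M[C]_n) <= 1.
Proof. by apply: opnorm_le => // x x1; rewrite mul1mx x1. Qed.

Lemma ler_cmod_ip_opnorm (M : 'M[C]_n) (u v : 'cV[C]_n) :
  cmod (ip u (M *m v)) <= vnorm u * (opnorm M * vnorm v).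
Proof.
apply: le_trans (ip_CauchySchwarz _ _) _.
by rewrite ler_wpM2l ?vnorm_ge0 ?ler_vnorm_mulmx.
Qed.

Lemma sum_sqr_vnorm_mulmx k (Cs : 'I_k -> 'M[C]_n) (z : 'cV[C]_n) :
  \sum_i adjmx (Cs i) *m Cs i = 1%:M ->
  \sum_i vnorm (Cs i *m z) ^+ 2 = vnorm z ^+ 2.
Proof.
move=> CsI; apply: complexI; rewrite rmorph_sum /=.
under eq_bigr => i _ do rewrite sqr_vnormC -ip_adjmxr mulmxA.
by rewrite -ip_sumr -mulmx_suml CsI mul1mx sqr_vnormC.
Qed.

Lemma opnorm_is_Mnorm : is_Mnorm (@opnorm R n).
Proof.
split; first exact: opnorm_is_norm.
move=> k X Cs CsI; set m := \big[Num.max/0]_(i < k) opnorm (X i).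
have m_ge0 : 0 <= m by apply: bigmax_ge_id.
apply: opnorm_le => // x x1; set y := _ *m x.
pose a i := vnorm (Cs i *m y); pose b i := vnorm (Cs i *m x).
have y2_le : vnorm y ^+ 2 <= m * \sum_i a i * b i.
  rewrite -[vnorm y ^+ 2]ger0_cmod ?exprn_ge0 ?vnorm_ge0 // sqr_vnormC.
  rewrite {2}/y mulmx_suml ip_sumr; apply: le_trans (ler_cmod_sum _) _.
  rewrite mulr_sumr; apply: ler_sum => i _; rewrite -!mulmxA ip_adjmxr.
  apply: le_trans (ler_cmod_ip_opnorm _ _ _) _; rewrite mulrCA ler_wpM2r ?mulr_ge0 ?vnorm_ge0 //.
  exact: le_bigmax.
have [y0|y_neq0] := eqVneq (vnorm y) 0; first by rewrite y0.
have y_gt0 : 0 < vnorm y by rewrite lt_def y_neq0 vnorm_ge0.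
have ab_le : \sum_i a i * b i <= vnorm y.
  have := ler_sum_mul_AMGM a b (vnorm y).
  rewrite !sum_sqr_vnorm_mulmx // x1 expr1n mulr1; nra.
have : vnorm y ^+ 2 <= m * vnorm y by apply: le_trans y2_le _; rewrite ler_wpM2l.
by rewrite expr2 ler_pM2r.
Qed.

End OperatorNorm.

Section NumericalRadius.
Context {R : realType}.
Local Notation C := R[i].
Local Notation "x %:C" := (real_complex R x) (format "x %:C").
Variable n : nat.
Implicit Types (A X : 'M[C]_n) (u v x y z : 'cV[C]_n).

Lemma quadformE X x : quadform X x = ip x (X *m x).
Proof. by rewrite /quadform /ip mulmxA. Qed.

Lemma quadformZ X c x : quadform X (c *: x) = c^* * c * quadform X x.
Proof. by rewrite !quadformE -scalemxAr ipZl ipZr mulrA. Qed.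

Lemma quadformDZ X u v c :
  quadform X (u + c *: v) = quadform X u + c * ip u (X *m v)
    + c^* * ip v (X *m u) + c^* * c * quadform X v.
Proof.
rewrite !quadformE mulmxDr -scalemxAr ipDl !ipDr !ipZl !ipZr.
by rewrite mulrA; ring.
Qed.

Lemma polarization X u v : let f c := quadform X (u + c *: v) in
  4 * ip u (X *m v) = f 1 - f (-1) - 'i * f 'i + 'i * f (- 'i).
Proof.
have conjNi : (- 'i : C)^* = 'i by rewrite raddfN /= conjCi opprK.
rewrite /= !quadformDZ conjC1 rmorphN1 conjCi conjNi.
set p := ip u _; set q := ip v _.
(* [ring] does not know that ['i ^+ 2 = -1]: insert it by hand. *)
have -> : 4 * p = 2 * p + 2 * q - 2 * 'i ^+ 2 * (p - q) by rewrite sqrCi; ring.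
ring.
Qed.

Let numrad_bounded X x : vnorm x = 1 -> cmod (quadform X x) <= opnorm X.
Proof.
move=> x1; rewrite quadformE; apply: le_trans (ler_cmod_ip_opnorm _ _ _) _.
by rewrite x1 !mul1r mulr1.
Qed.

Lemma ler_numrad X x : vnorm x = 1 -> cmod (quadform X x) <= numrad X.
Proof.
move=> x1; apply: le_sup_bounded; last by exists x.
by move=> _ [y [y1 ->]]; apply: numrad_bounded.
Qed.

Lemma numrad_le X c : 0 <= c ->
  (forall x, vnorm x = 1 -> cmod (quadform X x) <= c) -> numrad X <= c.
Proof. by move=> c0 Xc; apply: sup_le_nonneg => // _ [x [x1 ->]]; apply: Xc. Qed.

Lemma numrad_ge0 X : 0 <= numrad X.
Proof.
apply: sup_ge0_bounded => [_ [y [y1 ->]]|_ [y [_ ->]]]; last exact: cmod_ge0.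
exact: numrad_bounded.
Qed.

Lemma ler_cmod_quadform X x : cmod (quadform X x) <= numrad X * vnorm x ^+ 2.
Proof.
have [->|x0] := eqVneq x 0.
  by rewrite quadformE mulmx0 /ip mulmx0 mxE cmod0 vnorm0 expr0n /= mulr0.
have [u [u1 ->]] := unit_direction x0.
rewrite quadformZ !cmodM cmod_conjC vnormZ u1 mulr1 -expr2 mulrC.
by rewrite ler_wpM2r ?exprn_ge0 ?cmod_ge0 ?ler_numrad.
Qed.

Lemma entry_ip X i j : X i j = ip (delta_mx i 0) (X *m delta_mx j 0).
Proof.
rewrite col_delta ipE (bigD1 i) //= big1 ?addr0 => [|l li].
  by rewrite !mxE !eqxx conjC1 mul1r.
by rewrite !mxE (negbTE li) conjC0 mul0r.
Qed.

Lemma cmod_entry_le_numrad X i j : cmod (X i j) <= 4 * numrad X.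
Proof.
have quad_le c : cmod c = 1 ->
    cmod (quadform X (delta_mx i 0 + c *: delta_mx j 0)) <= 4 * numrad X.
  move=> c1; apply: le_trans (ler_cmod_quadform _ _) _.
  rewrite mulrC ler_wpM2r ?numrad_ge0 //.
  have : vnorm (delta_mx i 0 + c *: delta_mx j 0) <= 2.
    by apply: le_trans (ler_vnormD _ _) _; rewrite vnormZ c1 mul1r !vnorm_delta.
  have -> : 4 = 2 ^+ 2 :> R by rewrite expr2; lra.
  by rewrite ler_sqr ?nnegrE ?vnorm_ge0.
have cmodNi : cmod (- 'i : C) = 1 by rewrite cmodN cmodi.
have cmodN1 : cmod (-1 : C) = 1 by rewrite cmodN cmod1.
have : cmod (4 * X i j) <= 4 * numrad X + 4 * numrad X + 4 * numrad X + 4 * numrad X.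
  rewrite entry_ip polarization /=.
  apply: le_trans (ler_cmodD _ _) _; apply: lerD.
    apply: le_trans (ler_cmodD _ _) _; apply: lerD.
      apply: le_trans (ler_cmodD _ _) _; rewrite cmodN.
      exact: lerD (quad_le _ cmod1) (quad_le _ cmodN1).
    by rewrite cmodN cmodM cmodi mul1r; exact: quad_le _ cmodi.
  by rewrite cmodM cmodi mul1r; exact: quad_le _ cmodNi.
by rewrite cmodM cmod_nat; lra.
Qed.

Lemma mxtrace_adjmx_mulmx A X :
  \tr (adjmx A *m X) = \sum_j \sum_i (A i j)^* * X i j.
Proof. by apply: eq_bigr => j _; rewrite mxE; apply: eq_bigr => i _; rewrite !mxE. Qed.

Lemma mxtrace_adjmx_delta X i j :
  \tr (adjmx (delta_mx i j) *m X) = X i j.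
Proof.
rewrite mxtrace_adjmx_mulmx (bigD1 j) //= [X in _ + X]big1 => [|k kj]; last first.
  by rewrite big1 // => l _; rewrite !mxE (negbTE kj) andbF conjC0 mul0r.
rewrite addr0 (bigD1 i) //= [X in _ + X]big1 => [|l li]; last first.
  by rewrite !mxE (negbTE li) conjC0 mul0r.
by rewrite addr0 !mxE !eqxx conjC1 mul1r.
Qed.

Let numrad_dual_bounded A X : numrad X <= 1 ->
  cmod (\tr (adjmx A *m X)) <= 4 * \sum_i \sum_j cmod (A i j).
Proof.
move=> X1; rewrite mxtrace_adjmx_mulmx; apply: le_trans (ler_cmod_sum _) _.
rewrite [X in _ <= 4 * X]exchange_big mulr_sumr /=; apply: ler_sum => j _.
apply: le_trans (ler_cmod_sum _) _; rewrite mulr_sumr; apply: ler_sum => i _.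
rewrite cmodM cmod_conjC mulrC ler_wpM2r ?cmod_ge0 //.
by apply: le_trans (cmod_entry_le_numrad _ _ _) _; lra.
Qed.

Lemma ler_numrad_dual A X : numrad X <= 1 ->
  cmod (\tr (adjmx A *m X)) <= numrad_dual A.
Proof.
move=> X1; apply: le_sup_bounded; last by exists X.
by move=> _ [Y [Y1 ->]]; apply: numrad_dual_bounded.
Qed.

Lemma numrad_dual_ge0 A : 0 <= numrad_dual A.
Proof.
apply: sup_ge0_bounded => [_ [Y [Y1 ->]]|_ [Y [_ ->]]]; last exact: cmod_ge0.
exact: numrad_dual_bounded.
Qed.

Lemma quadform_rank1 x y z : quadform (y *m adjmx x) z = ip z y * ip x z.
Proof. by rewrite /quadform !mulmxA -(mulmxA (adjmx z *m y)) mxE big_ord1. Qed.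

Lemma opnorm_le_numrad_dual A : opnorm A <= numrad_dual A.
Proof.
apply: opnorm_le => [|x x1]; first exact: numrad_dual_ge0.
have [->|Ax0] := eqVneq (A *m x) 0; first by rewrite vnorm0 numrad_dual_ge0.
have [y [y1 Axy]] := unit_direction Ax0.
have rank1_le : numrad (y *m adjmx x) <= 1.
  apply: numrad_le => // z z1; rewrite quadform_rank1 cmodM.
  apply: le_trans (ler_pM (cmod_ge0 _) (cmod_ge0 _) (ip_CauchySchwarz _ _) (ip_CauchySchwarz _ _)) _.
  by rewrite z1 y1 x1 !mulr1.
apply: le_trans (ler_numrad_dual A rank1_le).
rewrite mulmxA mxtrace_mulC mulmxA -adjmxM trace_mx11 -/(ip _ _).
rewrite [in cmod _]Axy ipZl cmodM cmod_conjC -sqr_vnormC y1 expr1n rmorph1 cmod1.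
by rewrite mulr1 ger0_cmod ?vnorm_ge0.
Qed.

End NumericalRadius.

Section Factorizations.
Context {R : realType}.
Local Notation C := R[i].
Local Notation "x %:C" := (real_complex R x) (format "x %:C").
Variable n : nat.
Implicit Types (A B P U : 'M[C]_n) (d : 'rV[C]_n).

Lemma cmod_unitarymx_diag U j : U \is unitarymx -> cmod (U j j) <= 1.
Proof.
move=> /unitarymx_adjmx[UU _]; have := ler_cmod_vnorm (U *m delta_mx j 0) j.
by rewrite vnorm_isometry // vnorm_delta col_delta mxE.
Qed.

Lemma normalmx_spectral A : A \is normalmx ->
  exists P d, [/\ P \is unitarymx, A = adjmx P *m diag_mx d *m P
                & diag_mx d = P *m A *m adjmx P].
Proof.
move=> /orthomx_spectralP; set P := spectralmx A; set d := spectral_diag A.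
have Pu : P \is unitarymx by apply: spectral_unitarymx.
have [PP PP'] := unitarymx_adjmx Pu.
rewrite invmx_unitary // -adjmx_trmxC => AE; exists P, d; split => //.
by rewrite AE !mulmxA PP' mul1mx -mulmxA PP' mulmx1.
Qed.

Lemma unitarymx_spectral U : U \is unitarymx ->
  exists P d, [/\ P \is unitarymx, forall j, cmod (d 0 j) <= 1
                & U = adjmx P *m diag_mx d *m P].
Proof.
move=> Uu; have [UU UU'] := unitarymx_adjmx Uu.
have /normalmx_spectral[P [d [Pu UE dE]]] : U \is normalmx.
  by apply/normalmxP; rewrite -adjmx_trmxC UU UU'.
exists P, d; split => // j; have := @cmod_unitarymx_diag (diag_mx d) j.
rewrite mxE eqxx mulr1n; apply; rewrite dE.
by rewrite !mul_unitarymx ?adjmx_unitarymxE.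
Qed.

Lemma polar_unitmx B : B \in unitmx ->
  exists U P (t : 'I_n -> R), [/\ U \is unitarymx, P \is unitarymx,
    forall j, 0 < t j <= opnorm B & B = U *m adjmx P *m diag_mx (\row_j (t j)%:C) *m P].
Proof.
move=> Bu; set H := adjmx B *m B.
have /normalmx_spectral[P [d [Pu HE dE]]] : H \is normalmx.
  by apply/normalmxP; rewrite -adjmx_trmxC /H adjmxM adjmxK.
have [PP PP'] := unitarymx_adjmx Pu.
pose w j : 'cV[C]_n := adjmx P *m delta_mx j 0.
have w1 j : vnorm (w j) = 1 by rewrite vnorm_isometry ?adjmxK // vnorm_delta.
pose t j := vnorm (B *m w j).
have t_gt0 j : 0 < t j.
  rewrite lt_def vnorm_ge0 andbT; apply/eqP => /vnorm_eq0 Bw0.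
  by move: (w1 j); rewrite -(mulKmx Bu (w j)) Bw0 mulmx0 vnorm0 => /esym/eqP; rewrite oner_eq0.
have dt j : d 0 j = (t j ^+ 2)%:C.
  have := congr1 (fun M : 'M[C]_n => M j j) dE; rewrite /= mxE eqxx mulr1n => ->.
  rewrite entry_ip -!mulmxA -[P in ip _ (P *m _)]adjmxK ip_adjmxr -/(w j).
  by rewrite /H ip_adjmxr sqr_vnormC.
pose s := \row_j ((t j)^-1)%:C.
have sds : diag_mx s *m diag_mx d *m diag_mx s = 1%:M.
  rewrite !mulmx_diag -diag_const_mx; congr diag_mx; apply/rowP => j.
  by rewrite !mxE dt -!rmorphM /= expr2 mulrA mulVf ?mul1r ?divff ?lt0r_neq0.
pose U := B *m adjmx P *m diag_mx s *m P.
exists U, P, t; split => //.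
- have adjU : adjmx U = adjmx P *m diag_mx s *m P *m adjmx B.
    rewrite /U !adjmxM adjmxK adjmx_diag !mulmxA; congr (_ *m _ *m _ *m _).
    by congr diag_mx; apply/rowP => j; rewrite !mxE conj_real_complex.
  apply: adjmx_unitarymx; rewrite adjU.
  have -> : adjmx P *m diag_mx s *m P *m adjmx B *m U
      = adjmx P *m (diag_mx s *m (P *m H *m adjmx P) *m diag_mx s) *m P.
    by rewrite /U /H !mulmxA.
  by rewrite -dE sds mulmx1 PP.
- by move=> j; rewrite t_gt0 -(mulr1 (opnorm B)) -(w1 j) ler_vnorm_mulmx.
have -> : U *m adjmx P *m diag_mx (\row_j (t j)%:C) *m P
    = B *m adjmx P *m (diag_mx s *m (P *m adjmx P) *m diag_mx (\row_j (t j)%:C)) *m P.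
  by rewrite /U !mulmxA.
rewrite PP' mulmx1 mulmx_diag.
have -> : diag_mx (\row_j (s 0 j * (\row_j (t j)%:C) 0 j)) = 1%:M.
  rewrite -diag_const_mx; congr diag_mx; apply/rowP => j.
  by rewrite !mxE -rmorphM /= mulVf ?lt0r_neq0.
by rewrite mulmx1 -mulmxA PP mulmx1.
Qed.

End Factorizations.

Section Contractions.
Context {R : realType}.
Local Notation C := R[i].
Local Notation "x %:C" := (real_complex R x) (format "x %:C").
Variable n : nat.

Lemma mul_conj_rect (t s : R) :
  (t%:C + 'i * s%:C)^* * (t%:C + 'i * s%:C) = (t ^+ 2 + s ^+ 2)%:C.
Proof.
rewrite rmorphD rmorphM /= conjCi !conj_real_complex.
have -> : (t%:C + - 'i * s%:C) * (t%:C + 'i * s%:C) = t%:C ^+ 2 - 'i ^+ 2 * s%:C ^+ 2.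
  by ring.
by rewrite sqrCi rmorphD !rmorphXn /=; ring.
Qed.

Lemma unitmx_contraction_avg (B : 'M[C]_n) : B \in unitmx -> opnorm B <= 1 ->
  exists U1 U2, [/\ U1 \is unitarymx, U2 \is unitarymx & B = 2^-1 *: (U1 + U2)].
Proof.
move=> Bu B1; have [U [P [t [Uu Pu t_bnd BE]]]] := polar_unitmx Bu.
pose s j := Num.sqrt (1 - t j ^+ 2).
have ts1 j : t j ^+ 2 + s j ^+ 2 = 1.
  have /andP[t0 t1] := t_bnd j.
  rewrite sqr_sqrtr ?subr_ge0 ?expr_le1 ?(ltW t0) ?(le_trans t1) //; ring.
pose e (sgn : R) := \row_j ((t j)%:C + 'i * (sgn * s j)%:C).
have e_unitary (sgn : R) : sgn ^+ 2 = 1 -> diag_mx (e sgn) \is unitarymx.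
  move=> sgn1; apply: diag_unitarymx => j.
  by rewrite mxE mul_conj_rect exprMn sgn1 mul1r ts1.
pose V (sgn : R) := U *m adjmx P *m diag_mx (e sgn) *m P.
have V_unitary (sgn : R) : sgn ^+ 2 = 1 -> V sgn \is unitarymx.
  by move=> sgn1; rewrite !mul_unitarymx ?e_unitary ?adjmx_unitarymxE.
have tE : diag_mx (\row_j (t j)%:C) = 2^-1 *: (diag_mx (e 1) + diag_mx (e (-1))).
  apply/matrixP => a b; rewrite !mxE.
  case: eqVneq => [->|_]; last by rewrite !mulr0n addr0 mulr0.
  by rewrite !mulr1n mulN1r mul1r rmorphN; field.
exists (V 1), (V (-1)); split; rewrite ?V_unitary ?expr1n ?sqrrN ?expr1n //.
by rewrite BE tE /V -scalemxAr -scalemxAl mulmxDr mulmxDl scalerDr.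
Qed.

Lemma unitmx_small_shift (A : 'M[C]_n) (e : R) : 0 < e ->
  exists t : R, [/\ 0 < t, t <= e & A + (t%:C)%:M \in unitmx].
Proof.
move=> e_gt0; apply/not_existsP => no_t.
pose f (k : nat) : R := e / k.+1%:R.
have f_gt0 k : 0 < f k by rewrite divr_gt0 ?ltr0n.
have f_le k : f k <= e by rewrite ler_pdivrMr ?ltr0n // ler_pMr // ler1n.
pose rs := [seq - (f k)%:C | k <- iota 0 n.+1].
suff : (size rs < size (char_poly A))%N.
  by rewrite size_char_poly size_map size_iota ltnn.
apply: max_poly_roots; first exact: monic_neq0 (char_poly_monic A).
  apply/allP => _ /mapP [k _ ->]; rewrite -eigenvalue_root_char /eigenvalue /eigenspace.
  rewrite kermx_eq0 row_free_unit raddfN /= opprK.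
  by apply/negP => Au; apply: (no_t (f k)); split.
rewrite map_inj_uniq ?iota_uniq // => k1 k2 /oppr_inj /complexI.
by move/(mulfI (lt0r_neq0 e_gt0))/invr_inj/eqP; rewrite eqr_nat eqSS => /eqP.
Qed.

End Contractions.

Section MnormMaximality.
Context {R : realType}.
Local Notation C := R[i].
Local Notation "x %:C" := (real_complex R x) (format "x %:C").
Variable n' : nat.
Local Notation n := n'.+1.
Variable N : 'M[C]_n -> R.
Hypothesis N_Mnorm : is_Mnorm N.
Hypothesis N_le_dual : forall A, N A <= numrad_dual A.

Let N_ge0 A : 0 <= N A. Proof. by case: N_Mnorm.1. Qed.
Let NZ c A : N (c *: A) = cmod c * N A. Proof. by case: N_Mnorm.1. Qed.
Let ND A B : N (A + B) <= N A + N B. Proof. by case: N_Mnorm.1. Qed.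

Lemma Mnorm_unitary_conj (U X : 'M[C]_n) : U \is unitarymx ->
  N (adjmx U *m X *m U) <= N X.
Proof.
move=> /unitarymx_adjmx[UU _]; have := N_Mnorm.2 1 (fun _ => X) (fun _ => U).
rewrite !big_ord1 => /(_ UU) /le_trans; apply.
by apply/bigmax_leP; split.
Qed.

Lemma Mnorm_delta00 : N (delta_mx 0 0) <= 1.
Proof.
apply: le_trans (N_le_dual _) _; apply: sup_le_nonneg => // _ [X [X1 ->]].
rewrite mxtrace_adjmx_delta entry_ip -quadformE; apply: le_trans X1.
by apply: ler_numrad; rewrite vnorm_delta.
Qed.

Lemma Mnorm_diag (d : 'rV[C]_n) : (forall j, cmod (d 0 j) <= 1) -> N (diag_mx d) <= 1.
Proof.
move=> d1; have := N_Mnorm.2 n (fun i => d 0 i *: delta_mx 0 0) (fun i => delta_mx 0 i).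
have -> : \sum_(i < n) adjmx (delta_mx 0 i : 'M[C]_n) *m delta_mx 0 i = 1%:M.
  by rewrite mx1_sum_delta; apply: eq_bigr => i _; rewrite adjmx_delta mul_delta_mx.
have -> : \sum_(i < n) adjmx (delta_mx 0 i : 'M[C]_n) *m (d 0 i *: delta_mx 0 0 : 'M[C]_n) *m delta_mx 0 i
    = diag_mx d.
  rewrite diag_mx_sum_delta; apply: eq_bigr => i _.
  by rewrite adjmx_delta -scalemxAr -scalemxAl !mul_delta_mx.
move=> /(_ erefl) /le_trans; apply; apply/bigmax_leP; split => // i _.
by rewrite NZ mulr_ile1 ?cmod_ge0 ?N_ge0 ?d1 ?Mnorm_delta00.
Qed.

Lemma Mnorm_unitary (U : 'M[C]_n) : U \is unitarymx -> N U <= 1.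
Proof.
move=> /unitarymx_spectral[P [d [Pu d1 ->]]].
exact: le_trans (Mnorm_unitary_conj _ Pu) (Mnorm_diag d1).
Qed.

Lemma Mnorm_unitmx_contraction (B : 'M[C]_n) : B \in unitmx -> opnorm B <= 1 -> N B <= 1.
Proof.
move=> Bu B1; have [U1 [U2 [U1u U2u ->]]] := unitmx_contraction_avg Bu B1.
have -> : (2^-1 : C) = (2^-1 : R)%:C by rewrite fmorphV rmorph_nat.
rewrite NZ ger0_cmod ?invr_ge0 //.
have := ND U1 U2; have := Mnorm_unitary U1u; have := Mnorm_unitary U2u; lra.
Qed.

Lemma Mnorm_le_opnorm_unitmx (B : 'M[C]_n) : B \in unitmx -> N B <= opnorm B.
Proof.
move=> Bu; have B_neq0 : B != 0 by apply: contraTneq Bu => ->; rewrite unitmxE det0 unitr0.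
have o_gt0 : 0 < opnorm B.
  by rewrite lt_def opnorm_ge0 andbT; apply: contra B_neq0 => /eqP/opnorm_eq0 ->.
have c_neq0 : (opnorm B)^-1%:C != 0.
  by rewrite -(rmorph0 (real_complex R)) (inj_eq (@complexI R)) invr_eq0 lt0r_neq0.
have := @Mnorm_unitmx_contraction ((opnorm B)^-1%:C *: B).
rewrite unitmxZ ?unitfE // opnormZ NZ ger0_cmod ?invr_ge0 ?opnorm_ge0 // mulVf ?lt0r_neq0 //.
by move=> /(_ Bu (lexx _)); rewrite mulrC ler_pdivrMr // mul1r.
Qed.

Lemma Mnorm_le_opnorm (A : 'M[C]_n) : N A <= opnorm A.
Proof.
apply/ler_addgt0Pr => e e_gt0.
have [t [t_gt0 te At_unit]] := unitmx_small_shift A (divr_gt0 e_gt0 (ltr0n _ 2)).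
have AE : A = (A + (t%:C)%:M) + (- t%:C) *: 1%:M by rewrite scaleNr scalemx1 addrK.
have N1 : N 1%:M <= 1.
  by rewrite -diag_const_mx; apply: Mnorm_diag => j; rewrite mxE cmod1.
rewrite [in N _]AE; apply: le_trans (ND _ _) _; rewrite NZ cmodN ger0_cmod ?(ltW t_gt0) //.
apply: le_trans (lerD (Mnorm_le_opnorm_unitmx At_unit) (ler_wpM2l (ltW t_gt0) N1)) _.
apply: le_trans (lerD (ler_opnormD _ _) (lexx _)) _.
rewrite -scalemx1 opnormZ ger0_cmod ?(ltW t_gt0) //.
have := @opnorm1_le R n; move: te (opnorm A) (opnorm 1%:M); rewrite ler_pdivlMr // => te a o.
nra.
Qed.

End MnormMaximality.

Theorem corollary3p5 (R : realType) (n : nat) :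
  (* the operator norm belongs to the class ... *)
  (is_Mnorm (@opnorm R n) /\ (forall A : 'M[R[i]]_n, opnorm A <= numrad_dual A)) /\
  (* ... and dominates every member of the class *)
  (forall N : 'M[R[i]]_n -> R,
     is_Mnorm N -> (forall A, N A <= numrad_dual A) ->
     forall A, N A <= opnorm A).
Proof.
split; first by split; [exact: opnorm_is_Mnorm | exact: opnorm_le_numrad_dual].
case: n => [|n] N N_Mnorm N_le_dual A; last exact: Mnorm_le_opnorm.
have -> : A = 0 by apply/matrixP => -[].
have [_ _ NZ _] := N_Mnorm.1.
by have := NZ 0 0; rewrite scale0r cmod0 mul0r => ->; apply: opnorm_ge0.
Qed.
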